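(* Let $G$ be a red-blue colouring of $K_n$, let $u \in V(G)$, and let $A_1, \ldots, A_5$ be pairwise disjoint non-empty subsets of $V(G) \setminus \{u\}$ such that $(A_1, \ldots, A_5)$ is a pentagon blow-up in $G$. Suppose that $(A_1, \ldots, A_5)$ has no bad configuration with respect to $u$. Then $(A_i \cup \{u\}, A_{i+1}, \ldots, A_{i+4})$ is a pentagon blow-up in $G$ for some $i \in [5]$ (indices modulo 5).
   Context: A red-blue colouring of $K_n$ assigns red or blue to each edge of the complete graph on the $n$-vertex set $V(G)$. For pairwise disjoint non-empty sets $A_1,\dots,A_5 \subseteq V(G)$, $(A_1,\dots,A_5)$ is a pentagon blow-up if for every $i \in [5]$ all edges between $A_i$ and $A_{i+1}$ are red and all edges between $A_i$ and $A_{i+2}$ are blue (indices modulo 5). For $u \notin A_1\cup\dots\cup A_5$, a bad configuration in $(A_1,\dots,A_5)$ with respect to $u$ is either a set of three red neighbours of $u$, one from each of $A_i, A_{i+2}, A_{i+3}$ for some $i \in [5]$, or a set of three blue neighbours of $u$, one from each of $A_i, A_{i+1}, A_{i+2}$ for some $i \in [5]$. *)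

From mathcomp Require Import all_boot.
Set Implicit Arguments. Unset Strict Implicit. Unset Printing Implicit Defensive.

(* A red-blue colouring of the complete graph on vertex set T:
   [red x y] = true means the edge xy is red, false means blue.
   Only values at x <> y are meaningful; we require symmetry. *)
Definition colouring_sym (T : finType) (red : T -> T -> bool) : Prop :=
  forall x y : T, x != y -> red x y = red y x.

Definition sh (i : 'I_5) (k : nat) : 'I_5 :=
  Ordinal (ltn_pmod (i + k) (isT : 0 < 5)).

Definition pentagon_blowup (T : finType) (red : T -> T -> bool)
  (A : 'I_5 -> {set T}) : Prop :=
  (forall i j : 'I_5, i != j -> [disjoint A i & A j]) /\
  (forall i : 'I_5, A i != set0) /\
  (forall i : 'I_5, forall x y, x \in A i -> y \in A (sh i 1) -> red x y) /\
  (forall i : 'I_5, forall x y, x \in A i -> y \in A (sh i 2) -> ~~ red x y).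

Definition bad_config (T : finType) (red : T -> T -> bool)
  (A : 'I_5 -> {set T}) (u : T) : Prop :=
  (exists i : 'I_5, exists x y z,
      [/\ x \in A i, y \in A (sh i 2) & z \in A (sh i 3)] /\
      [/\ red u x, red u y & red u z]) \/
  (exists i : 'I_5, exists x y z,
      [/\ x \in A i, y \in A (sh i 1) & z \in A (sh i 2)] /\
      [/\ ~~ red u x, ~~ red u y & ~~ red u z]).

(* For each class A_j, u has a red or a blue neighbour in it, A_j being non-empty.  Having no bad
   configuration forbids red neighbours in three classes A_j, A_(j+2), A_(j+3) and blue neighbours
   in three consecutive classes; checking the 2^10 possible patterns then yields an index i such
   that u sees A_(i+1), A_(i+4) only in red and A_(i+2), A_(i+3) only in blue, which is exactly
   what is needed for u to join A_i. *)

From mathcomp Require Import all_boot.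

Lemma sh0 (i : 'I_5) : sh i 0 = i.
Proof. by apply/val_inj; rewrite /= addn0 modn_small. Qed.

Lemma shA (i j : 'I_5) k : sh i (sh j k) = sh (sh i j) k.
Proof. by apply/val_inj; rewrite /= modnDmr modnDml addnA. Qed.

Lemma sh_inj (i j k : 'I_5) : sh i j = sh i k -> j = k.
Proof.
move/(congr1 val)/eqP; rewrite /= eqn_modDl !modn_small // => /eqP.
exact: val_inj.
Qed.

Lemma shK (i : 'I_5) k : k <= 5 -> sh (sh i k) (5 - k) = i.
Proof.
by move=> le_k5; apply/val_inj; rewrite /= modnDml -addnA subnKC // modnDr modn_small.
Qed.

(* Intended reading: [r j] ([b j]) holds when u has a red (blue) neighbour in A_j. *)
Lemma pentagon_insertion_index (r b : 'I_5 -> bool) :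
  (forall j, r j || b j) ->
  (forall i, ~~ [&& r i, r (sh i 2) & r (sh i 3)]) ->
  (forall i, ~~ [&& b i, b (sh i 1) & b (sh i 2)]) ->
  exists i, [&& ~~ b (sh i 1), ~~ b (sh i 4), ~~ r (sh i 2) & ~~ r (sh i 3)].
Proof.
move=> rb no_r no_b; apply/existsP/contraT => /existsPn no_i.
pose o k : 'I_5 := inord k.
have shE k m : k < 5 -> sh (o k) m = o ((k + m) %% 5).
  by move=> lt_k5; apply/val_inj; rewrite /= !inordK // ltn_pmod.
move: (rb (o 0)) (rb (o 1)) (rb (o 2)) (rb (o 3)) (rb (o 4)).
move: (no_r (o 0)) (no_r (o 1)) (no_r (o 2)) (no_r (o 3)) (no_r (o 4)).
move: (no_b (o 0)) (no_b (o 1)) (no_b (o 2)) (no_b (o 3)) (no_b (o 4)).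
move: (no_i (o 0)) (no_i (o 1)) (no_i (o 2)) (no_i (o 3)) (no_i (o 4)).
rewrite !shE //=.
by move: (r (o 0)) (r (o 1)) (r (o 2)) (r (o 3)) (r (o 4))
  (b (o 0)) (b (o 1)) (b (o 2)) (b (o 3)) (b (o 4)) => [] [] [] [] [] [] [] [] [] [].
Qed.

Section InsertVertex.

Variables (T : finType) (red : T -> T -> bool) (u : T) (A : 'I_5 -> {set T}) (i : 'I_5).
Hypothesis u_notin : forall j, u \notin A j.

Let F (j : 'I_5) := if j == ord0 then u |: A i else A (sh i j).

Lemma mem_insert j x : x \in F j -> (j = ord0 /\ x = u) \/ x \in A (sh i j).
Proof.
rewrite /F; case: eqP => [-> | _]; last by right.
by rewrite sh0 in_setU1 => /orP [/eqP ->|]; [left | right].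
Qed.

Lemma insert_edges (P : rel T) k : 0 < k < 5 ->
  (forall x y, x != y -> P x y = P y x) ->
  (forall j x y, x \in A j -> y \in A (sh j k) -> P x y) ->
  {in A (sh i k) :|: A (sh i (5 - k)), forall x, P u x} ->
  forall j x y, x \in F j -> y \in F (sh j k) -> P x y.
Proof.
move=> /andP [k_gt0 k_lt5] P_sym PA Pu j x y.
move=> /mem_insert [[-> ->] | Ax] /mem_insert [[j_k ->] | Ay].
- by move: j_k => /(congr1 val) /=; rewrite add0n modn_small // => k0; rewrite k0 in k_gt0.
- by apply: Pu; rewrite shA sh0 in Ay; rewrite inE Ay.
- have j_eq : j = sh ord0 (5 - k) by rewrite -j_k shK // ltnW.
  rewrite j_eq shA sh0 in Ax.
  rewrite P_sym; last by apply: contraTneq Ax => ->.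
  by apply: Pu; rewrite inE Ax orbT.
- by apply: PA Ax _; rewrite -shA.
Qed.

Lemma pentagon_blowup_insert : colouring_sym red -> pentagon_blowup red A ->
  {in A (sh i 1) :|: A (sh i 4), forall x, red u x} ->
  {in A (sh i 2) :|: A (sh i 3), forall x, ~~ red u x} ->
  pentagon_blowup red F.
Proof.
move=> red_sym [A_dis [A_ne [A_red A_blue]]] u_red u_blue.
split; [|split; [|split]].
- move=> j k; rewrite -setI_eq0; apply: contraNT => /set0Pn [x].
  rewrite inE => /andP [/mem_insert Fx /mem_insert Fy].
  case: Fx Fy => [[-> x_u] | Ax] [[-> x_u'] | Ay] //.
  + by rewrite x_u (negbTE (u_notin _)) in Ay.
  + by rewrite x_u' (negbTE (u_notin _)) in Ax.
  + apply/eqP/(@sh_inj i)/eqP; apply: contraT => /A_dis /disjointFr /(_ Ax).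
    by rewrite Ay.
- move=> j; case/set0Pn: (A_ne (sh i j)) => x Ax; apply/set0Pn; exists x.
  rewrite /F; case: eqP => [j0 | _ //].
  by rewrite j0 sh0 in Ax; rewrite in_setU1 Ax orbT.
- exact: insert_edges.
- apply: (insert_edges (fun x y => ~~ red x y)) => //.
  by move=> x y /red_sym ->.
Qed.

End InsertVertex.

Theorem proposition7p10 (T : finType) (red : T -> T -> bool) (u : T)
  (A : 'I_5 -> {set T}) :
  colouring_sym red ->
  (forall i : 'I_5, u \notin A i) ->
  pentagon_blowup red A ->
  ~ bad_config red A u ->
  exists i : 'I_5,
    pentagon_blowup red
      (fun j : 'I_5 => if j == ord0 then u |: A i else A (sh i j)).
Proof.
move=> red_sym u_notin A_blowup no_bad.
have [_ [A_ne _]] := A_blowup.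
pose r j := [exists x in A j, red u x].
pose b j := [exists x in A j, ~~ red u x].
have rb j : r j || b j.
  have [x Ax] := set0Pn _ (A_ne j).
  by case: (boolP (red u x)) => ux; apply/orP; [left | right]; apply/exists_inP; exists x.
have no_r i : ~~ [&& r i, r (sh i 2) & r (sh i 3)].
  apply/and3P => -[/exists_inP [x Ax ux] /exists_inP [y Ay uy] /exists_inP [z Az uz]].
  by apply: no_bad; left; exists i, x, y, z.
have no_b i : ~~ [&& b i, b (sh i 1) & b (sh i 2)].
  apply/and3P => -[/exists_inP [x Ax ux] /exists_inP [y Ay uy] /exists_inP [z Az uz]].
  by apply: no_bad; right; exists i, x, y, z.
have [i /and4P [/exists_inPn b1 /exists_inPn b4 /exists_inPn r2 /exists_inPn r3]] :=
  pentagon_insertion_index _ _ rb no_r no_b.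
exists i; apply: pentagon_blowup_insert => // x; rewrite inE => /orP [] Ax.
- exact/negbNE/b1.
- exact/negbNE/b4.
- exact: r2.
- exact: r3.
Qed.
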